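(* Assume (i) $\eta^t=1/\sqrt t$ for all $t$; (ii) $\rho^t>0$ is nondecreasing and $\rho^t\le\rho^{\max}$ for all $t$; (iii) $f_p(\cdot)=f_p(\cdot;\mathcal{D}_p)$ is $L$-Lipschitz on $\mathcal{W}$ with respect to the Euclidean norm. Fix $t$ and $p$, let $w^{t+1},\lambda^t_p,z^t_p\in\mathbb{R}^{J\times K}$ and a noise realization $\tilde\xi^t_p\in\mathbb{R}^{J\times K}$ be given, let $$z^{t+1}_p=\operatorname{argmin}_{z\in\mathcal{W}}\langle f'_p(z^t_p),z\rangle+\tfrac{\rho^t}{2}\big\|w^{t+1}-z+\tfrac1{\rho^t}(\lambda^t_p-\tilde\xi^t_p)\big\|^2+\tfrac1{2\eta^t}\|z-z^t_p\|^2,$$ and $\lambda^{t+1}_p=\lambda^t_p+\rho^t(w^{t+1}-z^{t+1}_p)$. Then for all $z_p\in\mathcal{W}$, $$f_p(z^t_p)-f_p(z_p)-\langle\lambda^{t+1}_p,z^{t+1}_p-z_p\rangle\le\frac{\eta^t\|f'_p(z^t_p)+\tilde\xi^t_p\|^2}{2}+\frac1{2\eta^t}\big(\|z_p-z^t_p\|^2-\|z_p-z^{t+1}_p\|^2\big)+\langle\tilde\xi^t_p,z_p-z^t_p\rangle.$$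
   Context: $\mathbb{R}^{J\times K}$ carries the Frobenius inner product and norm. $\mathcal{W}\subset\mathbb{R}^{J\times K}$ is compact convex. $f_p(z)=\frac1I\sum_{i=1}^{I_p}\varphi(z;x_{pi},y_{pi})+\frac\beta Pr(z)$ is the local empirical risk of agent $p$ with convex loss $\varphi$ and convex regularizer $r$ on $\mathbb{R}^{J\times K}$, $\beta>0$; $f'_p(z)$ denotes a fixed subgradient of $f_p$ at $z$. *)

From HB Require Import structures.
From mathcomp Require Import all_boot all_order all_algebra.
From mathcomp Require Import all_classical all_reals topology num_topology matrix_topology.
Import numFieldTopology.Exports.
Set Implicit Arguments. Unset Strict Implicit. Unset Printing Implicit Defensive.
Import Order.TTheory GRing.Theory Num.Theory.
Local Open Scope ring_scope.
Local Open Scope classical_set_scope.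

Definition frob (R : realType) (J K : nat) (A B : 'M[R]_(J, K)) : R :=
  \sum_(i < J) \sum_(j < K) A i j * B i j.

Definition frob_norm (R : realType) (J K : nat) (A : 'M[R]_(J, K)) : R :=
  Num.sqrt (frob A A).

Definition convex_mxset (R : realType) (J K : nat) (W : set 'M[R]_(J, K)) : Prop :=
  forall a b (l : R), W a -> W b -> 0 <= l -> l <= 1 ->
    W (l *: a + (1 - l) *: b).

Definition convex_mxfun (R : realType) (J K : nat) (g : 'M[R]_(J, K) -> R) : Prop :=
  forall a b (l : R), 0 <= l -> l <= 1 ->
    g (l *: a + (1 - l) *: b) <= l * g a + (1 - l) * g b.

Definition local_risk (R : realType) (J K : nat) (X Y : Type)
  (phi : 'M[R]_(J, K) -> X -> Y -> R) (r : 'M[R]_(J, K) -> R)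
  (I P Ip : nat) (beta : R) (x : 'I_Ip -> X) (y : 'I_Ip -> Y)
  (z : 'M[R]_(J, K)) : R :=
  (I%:R)^-1 * (\sum_(i < Ip) phi z (x i) (y i)) + beta / P%:R * r z.

From HB Require Import structures.
From mathcomp Require Import all_boot all_order all_algebra.
From mathcomp Require Import all_classical all_reals topology num_topology matrix_topology.
From mathcomp Require Import ring lra.
Import numFieldTopology.Exports.
Import Order.TTheory GRing.Theory Num.Theory.
Local Open Scope ring_scope.
Local Open Scope classical_set_scope.

(* Since z^{t+1} minimizes a convex quadratic-plus-linear objective over the
   convex set W, comparing it with z^{t+1} + s (z_p - z^{t+1}) for small s > 0
   gives the variational inequality
     <f'_p(z^t) - (lambda^{t+1} - xi) + (z^{t+1} - z^t) / eta, z_p - z^{t+1}> >= 0.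
   Adding the subgradient inequality at z^t, expanding
   ||z_p - z^t||^2 = ||(z_p - z^{t+1}) + (z^{t+1} - z^t)||^2, and absorbing the
   cross term <f'_p(z^t) + xi, z^{t+1} - z^t> by Young's inequality yields the
   bound.  Compactness of W, Lipschitz continuity, the assumptions on rho and
   the exact value of eta^t are not needed: only eta^t > 0 is. *)

Section Frobenius.
Context {R : realType} {J K : nat}.
Implicit Types (A B C : 'M[R]_(J, K)).

Lemma frobC A B : frob A B = frob B A.
Proof. by apply: eq_bigr => i _; apply: eq_bigr => j _; rewrite mulrC. Qed.

Lemma frobDl A B C : frob (A + B) C = frob A C + frob B C.
Proof.
rewrite /frob -big_split; apply: eq_bigr => i _; rewrite -big_split.
by apply: eq_bigr => j _; rewrite mxE mulrDl.
Qed.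

Lemma frobZl (a : R) A B : frob (a *: A) B = a * frob A B.
Proof.
rewrite /frob mulr_sumr; apply: eq_bigr => i _; rewrite mulr_sumr.
by apply: eq_bigr => j _; rewrite mxE mulrA.
Qed.

Lemma frobNl A B : frob (- A) B = - frob A B.
Proof. by rewrite -scaleN1r frobZl mulN1r. Qed.

Lemma frobBl A B C : frob (A - B) C = frob A C - frob B C.
Proof. by rewrite frobDl frobNl. Qed.

Lemma frobDr A B C : frob A (B + C) = frob A B + frob A C.
Proof. by rewrite frobC frobDl !(frobC A). Qed.

Lemma frobZr (a : R) A B : frob A (a *: B) = a * frob A B.
Proof. by rewrite frobC frobZl frobC. Qed.

Lemma frobNr A B : frob A (- B) = - frob A B.
Proof. by rewrite frobC frobNl frobC. Qed.

Lemma frob_ge0 A : 0 <= frob A A.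
Proof. by apply: sumr_ge0 => i _; apply: sumr_ge0 => j _; rewrite -expr2 sqr_ge0. Qed.

Lemma frob_normE A : frob_norm A ^+ 2 = frob A A.
Proof. by rewrite /frob_norm sqr_sqrtr // frob_ge0. Qed.

Lemma frob_normD A B :
  frob_norm (A + B) ^+ 2 = frob_norm A ^+ 2 + 2 * frob A B + frob_norm B ^+ 2.
Proof. by rewrite !frob_normE frobDl !frobDr (frobC B A); ring. Qed.

Lemma frob_normDZ A B (s : R) :
  frob_norm (A + s *: B) ^+ 2
  = frob_norm A ^+ 2 + 2 * s * frob A B + s ^+ 2 * frob_norm B ^+ 2.
Proof. by rewrite frob_normD frobZr !frob_normE frobZl frobZr; ring. Qed.

Lemma frob_young (e : R) A B : 0 < e ->
  - frob A B <= e / 2 * frob_norm A ^+ 2 + (2 * e)^-1 * frob_norm B ^+ 2.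
Proof.
move=> e_gt0; rewrite -subr_ge0.
have -> : e / 2 * frob_norm A ^+ 2 + (2 * e)^-1 * frob_norm B ^+ 2 - - frob A B
          = (2 * e)^-1 * frob_norm (B + e *: A) ^+ 2.
  by rewrite frob_normDZ (frobC B A); field; rewrite gt_eqF.
by rewrite mulr_ge0 ?sqr_ge0 // invr_ge0 mulr_ge0 // ltW.
Qed.

End Frobenius.

Lemma ge0_of_lin_quad {R : realFieldType} (a b : R) :
  (forall s, 0 < s -> s <= 1 -> 0 <= s * a + s ^+ 2 * b) -> 0 <= a.
Proof.
move=> lin_quad_ge0; rewrite leNgt; apply/negP => a_lt0.
have D_gt0 : 0 < `|b| - a by have := normr_ge0 b; lra.
(* s = -a / (|b| - a) makes s * |b| < -a, hence s * a + s^2 * b < 0. *)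
set s := - a / (`|b| - a).
have s_gt0 : 0 < s by rewrite divr_gt0 // oppr_gt0.
have sD : s * (`|b| - a) = - a by rewrite mulrVK // unitfE gt_eqF.
have s_le1 : s <= 1.
  by rewrite ler_pdivrMr // mul1r; have := normr_ge0 b; lra.
have := lin_quad_ge0 s s_gt0 s_le1.
have : s ^+ 2 * b <= s ^+ 2 * `|b| by rewrite ler_wpM2l ?sqr_ge0 ?ler_norm.
have : s * a + s ^+ 2 * `|b| = s ^+ 2 * a.
  have sb : s * `|b| = - a + s * a by rewrite -sD; ring.
  by rewrite expr2 -mulrA sb; ring.
have : 0 < s ^+ 2 by rewrite exprn_gt0.
clearbody s; nra.
Qed.

Lemma convex_mxset_segment {R : realType} {J K : nat} {W : set 'M[R]_(J, K)}
    {a b : 'M[R]_(J, K)} {s : R} :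
  convex_mxset W -> W a -> W b -> 0 <= s -> s <= 1 -> W (a + s *: (b - a)).
Proof.
move=> W_convex Wa Wb s_ge0 s_le1.
have -> : a + s *: (b - a) = s *: b + (1 - s) *: a.
  by rewrite scalerBr scalerBl scale1r addrCA addrC.
exact: W_convex Wb Wa s_ge0 s_le1.
Qed.

Lemma quad_minimizer_variational_ineq {R : realType} {J K : nat}
    {W : set 'M[R]_(J, K)} {g m n z1 : 'M[R]_(J, K)} {a b : R} :
  convex_mxset W -> W z1 ->
  (forall z, W z ->
     frob g z1 + a * frob_norm (m - z1) ^+ 2 + b * frob_norm (z1 - n) ^+ 2
     <= frob g z + a * frob_norm (m - z) ^+ 2 + b * frob_norm (z - n) ^+ 2) ->
  forall z, W z -> 0 <= frob (g - (2 * a) *: (m - z1) + (2 * b) *: (z1 - n)) (z - z1).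
Proof.
move=> W_convex Wz1 z1_min z Wz; set d := z - z1.
apply: (@ge0_of_lin_quad _ _ ((a + b) * frob_norm d ^+ 2)) => s s_gt0 s_le1.
have := z1_min _ (convex_mxset_segment W_convex Wz1 Wz (ltW s_gt0) s_le1).
have -> : m - (z1 + s *: d) = (m - z1) + (- s) *: d by rewrite scaleNr opprD addrA.
have -> : z1 + s *: d - n = (z1 - n) + s *: d by rewrite addrAC.
rewrite !frob_normDZ frobDr frobZr -/d => min_ineq.
rewrite frobDl frobBl !frobZl; lra.
Qed.

Theorem proposition3
  (R : realType) (J K : nat) (W : set 'M[R]_(J, K))
  (W_convex : convex_mxset W) (W_compact : compact W)
  (X Y : Type) (phi : 'M[R]_(J, K) -> X -> Y -> R) (r : 'M[R]_(J, K) -> R)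
  (I P Ip : nat) (beta : R) (x : 'I_Ip -> X) (y : 'I_Ip -> Y)
  (phi_convex : forall a b, convex_mxfun (fun z => phi z a b))
  (r_convex : convex_mxfun r) (beta_pos : 0 < beta)
  (fp' : 'M[R]_(J, K) -> 'M[R]_(J, K))
  (fp'_subgrad : forall z u,
     local_risk phi r I P beta x y z + frob (fp' z) (u - z)
       <= local_risk phi r I P beta x y u)
  (eta rho : nat -> R) (rhomax L : R)
  (eta_def : forall s : nat, (0 < s)%N -> eta s = (Num.sqrt (s%:R : R))^-1)
  (rho_pos : forall s, 0 < rho s)
  (rho_nondecr : forall s1 s2 : nat, (s1 <= s2)%N -> rho s1 <= rho s2)
  (rho_le_max : forall s, rho s <= rhomax)
  (f_lipschitz : forall a b, W a -> W b ->
     `|local_risk phi r I P beta x y a - local_risk phi r I P beta x y b|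
        <= L * frob_norm (a - b))
  (t : nat) (t_pos : (0 < t)%N)
  (w1 lam zt xi z1 lam1 : 'M[R]_(J, K))
  (z1_argmin : W z1 /\ forall z, W z ->
     let obj := fun v : 'M[R]_(J, K) =>
       frob (fp' zt) v
       + rho t / 2 * frob_norm (w1 - v + (rho t)^-1 *: (lam - xi)) ^+ 2
       + (2 * eta t)^-1 * frob_norm (v - zt) ^+ 2 in
     obj z1 <= obj z)
  (lam1_def : lam1 = lam + rho t *: (w1 - z1)) :
  forall zp, W zp ->
    local_risk phi r I P beta x y zt - local_risk phi r I P beta x y zp
      - frob lam1 (z1 - zp)
    <= eta t * frob_norm (fp' zt + xi) ^+ 2 / 2
       + (2 * eta t)^-1 * (frob_norm (zp - zt) ^+ 2 - frob_norm (zp - z1) ^+ 2)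
       + frob xi (zp - zt).
Proof.
move=> zp Wzp; case: z1_argmin => Wz1 z1_min.
set f := local_risk phi r I P beta x y; set g := fp' zt.
set et := eta t; set rh := rho t; set c := rh^-1 *: (lam - xi).
have et_gt0 : 0 < et by rewrite /et eta_def // invr_gt0 sqrtr_gt0 ltr0n.
have rh_neq0 : rh != 0 := lt0r_neq0 (rho_pos t).
have halve : et^-1 = 2 * (2 * et)^-1 by field; rewrite gt_eqF.
have variational_ineq :
    0 <= frob (g - (lam1 - xi) + et^-1 *: (z1 - zt)) (zp - z1).
  have multiplier : (2 * (rh / 2)) *: (w1 + c - z1) = lam1 - xi.
    by rewrite lam1_def /c -/rh; apply/matrixP => i j; rewrite !mxE; field.
  rewrite -multiplier halve.
  apply: (quad_minimizer_variational_ineq W_convex Wz1 _ zp Wzp) => z Wz.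
  have shift_c v : w1 + c - v = w1 - v + c by rewrite addrAC.
  by rewrite !shift_c; exact: z1_min.
set d := zp - z1 in variational_ineq *; set e := z1 - zt in variational_ineq.
have split : zp - zt = d + e by rewrite addrA subrK.
have subgrad := fp'_subgrad zt zp; rewrite -/f -/g split frobDr in subgrad.
have young := frob_young et (g + xi) e et_gt0; rewrite frobDl in young.
rewrite frobDl !frobBl frobZl (frobC e d) halve in variational_ineq.
rewrite -(opprB zp z1) -/d frobNr split (frob_normD d e) frobDr.
set ie := (2 * et)^-1 in young variational_ineq *.
clearbody ie.
lra.
Qed.
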